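(* Let $L$ be an oriented, ordered virtual link diagram with affine bilabeling $C$. Let $L_i$ be a component of weight $n$ whose starting point $s$ carries bilabel $(a_1,a_2)$. Let $c$ be the first classical crossing met by $L_i$ after $s$ (in the direction of orientation), and suppose $c$ is an external crossing. Let $\iota\in\{\pm1\}$ be the index change of $L_i$'s passage through $c$. Let $C'$ be the bilabeling obtained by moving the starting point of $L_i$ forward to a point $s'$ just past $c$, still with starting bilabel $(a_1,a_2)$, and keeping everything else the same. Then: - the weight of $c$ changes by $+(n-\iota)$ if $L_i$ is the overstrand at $c$, and by $-(n-\iota)$ if $L_i$ is the understrand at $c$, i.e. $W_{C'}(c)=W_C(c)\pm(n-\iota)$; and - all other labels of $L_i$ (those not on the segment between $s$ and $s'$) shift by $-\iota$.
   Context: **Diagrams.** A virtual link diagram is an oriented planar diagram of ordered closed curves $L_1,\dots,L_n$ (components) with classical and virtual crossings. **Crossing conventions.** Draw a classical crossing with both strands oriented upward. - The bottom-left-to-top-right strand has index change $-1$; the bottom-right-to-top-left strand has index change $+1$. - The crossing is positive if the overstrand is the bottom-left-to-top-right strand, and negative otherwise. - Self-crossings have both strands on one component; external crossings have strands on different components. - The weight of a component $L_i$ is the sum of the index changes of $L_i$ over its passages through external classical crossings. **Affine bilabeling.** - Each component gets a starting point with bilabel $(a^{(i)}_1,a^{(i)}_2)$ of formal integer variables. - The bilabel is carried along the component in its orientation and is unchanged at virtual crossings. - At a classical crossing with index change $\varepsilon$, the first entry changes by $\varepsilon$ if the crossing is a self-crossing, and the second entry changes by $\varepsilon$ if external. -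 On returning to the starting point, the label is off by the component's weight in the second entry; this discrepancy is placed at the starting point. **Crossing weight.** For $|(x,y)|=x+y$ and $c$ drawn with both strands upward: - if $c$ is positive, $W(c)=|\text{bottom-left}|-|\text{top-left}|$; - if $c$ is negative, $W(c)=|\text{bottom-right}|-|\text{top-right}|$. Weights are computed with the labels as integer linear expressions in the same formal variables. *)

(* Combinatorial (Gauss-diagram) model of oriented, ordered
   virtual link diagrams with affine bilabelings. *)
From mathcomp Require Import all_boot all_order all_algebra.
Set Implicit Arguments. Unset Strict Implicit. Unset Printing Implicit Defensive.
Import GRing.Theory Num.Theory.
Local Open Scope ring_scope.

(* A diagram with [m] ordered components L_0..L_{m-1} and [k] classical crossings.
   A passage is a pair (c, o) : crossing c, with o = true for the overstrand
   passage and o = false for the understrand passage.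
   [gcomp D i] lists the classical-crossing passages of component L_i in order
   of orientation, starting from the starting point of L_i.
   [csign D c] = true iff c is a positive crossing.
   Virtual crossings do not affect bilabels and are not recorded. *)
Record vdiagram (m k : nat) := VDiagram {
  gcomp : 'I_m -> seq ('I_k * bool);
  csign : 'I_k -> bool }.

Definition wf_diagram m k (D : vdiagram m k) : bool :=
  perm_eq (flatten [seq gcomp D i | i <- enum 'I_m]) (enum {: 'I_k * bool}).

(* Drawn with both strands upward: the overstrand is the bottom-left-to-top-right
   strand iff the crossing is positive. *)
Definition is_BLTR m k (D : vdiagram m k) (p : 'I_k * bool) : bool :=
  p.2 == csign D p.1.

Definition index_change m k (D : vdiagram m k) (p : 'I_k * bool) : int :=
  if is_BLTR D p then -1 else 1.

Definition self_crossing m k (D : vdiagram m k) (c : 'I_k) : bool :=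
  [exists i, ((c, true) \in gcomp D i) && ((c, false) \in gcomp D i)].

Definition bilabel := (int * int)%type.

Definition delta m k (D : vdiagram m k) (p : 'I_k * bool) : bilabel :=
  if self_crossing D p.1 then (index_change D p, 0) else (0, index_change D p).

(* label of the j-th segment of L_i (segment 0 starts at the starting point,
   segment j follows the j-th passage); a i is the starting bilabel of L_i *)
Definition label_at m k (D : vdiagram m k) (a : 'I_m -> bilabel) (i : 'I_m)
  (j : nat) : bilabel :=
  ((a i).1 + \sum_(p <- take j (gcomp D i)) (delta D p).1,
   (a i).2 + \sum_(p <- take j (gcomp D i)) (delta D p).2).

Definition comp_weight m k (D : vdiagram m k) (i : 'I_m) : int :=
  \sum_(p <- gcomp D i | ~~ self_crossing D p.1) index_change D p.

Definition comp_of m k (D : vdiagram m k) (p : 'I_k * bool) : option 'I_m :=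
  [pick i | p \in gcomp D i].

Definition in_label m k (D : vdiagram m k) a (p : 'I_k * bool) : bilabel :=
  if comp_of D p is Some i then label_at D a i (index p (gcomp D i)) else (0, 0).
Definition out_label m k (D : vdiagram m k) a (p : 'I_k * bool) : bilabel :=
  if comp_of D p is Some i then label_at D a i (index p (gcomp D i)).+1 else (0, 0).

Definition bl_abs (x : bilabel) : int := x.1 + x.2.

(* corners of crossing c drawn with both strands upward *)
Definition BL m k (D : vdiagram m k) a c := in_label D a (c, csign D c).
Definition TR m k (D : vdiagram m k) a c := out_label D a (c, csign D c).
Definition BR m k (D : vdiagram m k) a c := in_label D a (c, ~~ csign D c).
Definition TL m k (D : vdiagram m k) a c := out_label D a (c, ~~ csign D c).

Definition crossing_weight m k (D : vdiagram m k) a (c : 'I_k) : int :=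
  if csign D c then bl_abs (BL D a c) - bl_abs (TL D a c)
  else bl_abs (BR D a c) - bl_abs (TR D a c).

Definition move_start m k (D : vdiagram m k) (i : 'I_m) : vdiagram m k :=
  VDiagram (fun j => if j == i then rot 1 (gcomp D j) else gcomp D j) (csign D).

From mathcomp Require Import all_boot all_order all_algebra.
From mathcomp Require Import zify.
Import GRing.Theory Num.Theory.
Local Open Scope ring_scope.

Set Implicit Arguments.
Unset Strict Implicit.
Unset Printing Implicit Defensive.

(* Moving the start of L_i past its first passage p = (c, b) rotates the passage
   list of L_i by one, so every later segment of L_i loses the increment
   delta(p) = (0, iota). The strand of L_i entering c becomes the last segment,
   and the strand leaving c carries the label reached after a full turn; around
   a component the two passages of each self-crossing have opposite index
   changes, so a full turn adds exactly (0, n). Hence both labels of L_i at c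
   grow in size by n - iota, while the other strand of c lies on another
   component and keeps its labels. *)

Section Passages.
Variables (m k : nat) (D : vdiagram m k).

Lemma index_changeN c b : index_change D (c, ~~ b) = - index_change D (c, b).
Proof. by rewrite /index_change /is_BLTR /=; case: b; case: (csign D c). Qed.

Lemma comp_of_mem p j : comp_of D p = Some j -> p \in gcomp D j.
Proof. by rewrite /comp_of; case: pickP => // j' hj' [<-]. Qed.

Lemma sum_delta2_gcomp i : \sum_(p <- gcomp D i) (delta D p).2 = comp_weight D i.
Proof.
by rewrite /comp_weight [RHS]big_mkcond; apply: eq_bigr => p _; rewrite /delta; case: ifP.
Qed.

Lemma label_at0 a i : label_at D a i 0 = a i.
Proof. by rewrite /label_at take0 !big_nil !addr0; case: (a i). Qed.

Lemma self_crossing_of_mem c b j :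
  (c, b) \in gcomp D j -> (c, ~~ b) \in gcomp D j -> self_crossing D c.
Proof. by move=> cb_j cnb_j; apply/existsP; exists j; case: b cb_j cnb_j => -> ->. Qed.

End Passages.

(* For either sign, W(c) is |in-label of the overstrand| - |out-label of the understrand|. *)
Lemma crossing_weight_shift m k (D D' : vdiagram m k) a a' c b d :
  csign D' c = csign D c ->
  bl_abs (in_label D' a' (c, b)) = bl_abs (in_label D a (c, b)) + d ->
  bl_abs (out_label D' a' (c, b)) = bl_abs (out_label D a (c, b)) + d ->
  in_label D' a' (c, ~~ b) = in_label D a (c, ~~ b) ->
  out_label D' a' (c, ~~ b) = out_label D a (c, ~~ b) ->
  crossing_weight D' a' c = crossing_weight D a c + (if b then d else - d).
Proof.
rewrite /crossing_weight /BL /TL /BR /TR => -> in_b out_b in_nb out_nb.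
case: b in_b out_b in_nb out_nb; case: (csign D c) => /= in_b out_b in_nb out_nb;
  rewrite ?in_b ?out_b ?in_nb ?out_nb; lia.
Qed.

Section WellFormed.
Variables (m k : nat) (D : vdiagram m k).
Hypothesis wfD : wf_diagram D.

Lemma sum_count_gcomp p : (\sum_(j < m) count_mem p (gcomp D j) = 1)%N.
Proof.
have := permP wfD (pred1 p).
rewrite count_flatten sumnE !big_map count_uniq_mem ?enum_uniq // mem_enum.
by rewrite -enumT big_enum /= => <-; apply: eq_bigl.
Qed.

Lemma count_mem_gcomp p j : count_mem p (gcomp D j) = (p \in gcomp D j).
Proof.
have := sum_count_gcomp p; rewrite (bigD1 j) //=.
case: (boolP (p \in gcomp D j)) => [|/count_memPn -> //].
by rewrite -has_pred1 has_count; move: (count _ _) (\sum_(i < m | _) _)%N; lia.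
Qed.

Lemma gcomp_uniq j : uniq (gcomp D j).
Proof. by apply: count_mem_uniq => p; apply: count_mem_gcomp. Qed.

Lemma mem_gcomp_inj p j1 j2 : p \in gcomp D j1 -> p \in gcomp D j2 -> j1 = j2.
Proof.
move=> p_j1 p_j2; apply/eqP; apply: contraT => j12.
have := sum_count_gcomp p; rewrite (bigD1 j1) // (bigD1 j2) 1?eq_sym //=.
by rewrite !count_mem_gcomp p_j1 p_j2.
Qed.

Lemma comp_of_gcomp p j : p \in gcomp D j -> comp_of D p = Some j.
Proof.
move=> p_j; rewrite /comp_of; case: pickP => [j' /mem_gcomp_inj/(_ p_j) -> // | /(_ j)].
by rewrite p_j.
Qed.

Lemma self_crossing_mem c b j :
  self_crossing D c -> ((c, ~~ b) \in gcomp D j) = ((c, b) \in gcomp D j).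
Proof.
case/existsP=> j0 /andP[ct cf].
have same_comp bb : ((c, bb) \in gcomp D j) = (j == j0).
  apply/idP/eqP => [cj | ->]; last by case: bb.
  by apply: mem_gcomp_inj cj _; case: bb.
by rewrite !same_comp.
Qed.

Lemma sum_delta1_gcomp i : \sum_(p <- gcomp D i) (delta D p).1 = 0.
Proof.
rewrite big_uniq ?gcomp_uniq //= big_mkcond /=.
pose F c b := if (c, b) \in gcomp D i then (delta D (c, b)).1 else 0.
rewrite (eq_bigr (fun p => F p.1 p.2)); last by case.
rewrite -(pair_bigA _ F) big1 // => c _; rewrite big_bool /F /delta /=.
have [self_c | _] := boolP (self_crossing D c); last by rewrite !if_same addr0.
rewrite -[true]/(~~ false) self_crossing_mem //.
by case: ifP; rewrite ?addr0 // index_changeN addNr.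
Qed.

Lemma label_at_size a i :
  label_at D a i (size (gcomp D i)) = ((a i).1, (a i).2 + comp_weight D i).
Proof. by rewrite /label_at take_size sum_delta1_gcomp sum_delta2_gcomp addr0. Qed.

End WellFormed.

Section MoveStart.
Variables (m k : nat) (D : vdiagram m k) (i : 'I_m).
Local Notation D' := (move_start D i).

Lemma gcomp_move_start_other j : j != i -> gcomp D' j = gcomp D j.
Proof. by move=> /negbTE /= ->. Qed.

Lemma perm_gcomp_move_start j : perm_eq (gcomp D' j) (gcomp D j).
Proof. by rewrite /=; case: ifP => _; rewrite ?perm_rot. Qed.

Lemma self_crossing_move_start c : self_crossing D' c = self_crossing D c.
Proof.
by apply: eq_existsb => j; rewrite !(perm_mem (perm_gcomp_move_start j)).
Qed.

Lemma delta_move_start p : delta D' p = delta D p.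
Proof. by rewrite /delta self_crossing_move_start. Qed.

Lemma comp_of_move_start p : comp_of D' p = comp_of D p.
Proof. by apply: eq_pick => j /=; rewrite (perm_mem (perm_gcomp_move_start j)). Qed.

Lemma label_at_move_startE a j x : label_at D' a j x =
  ((a j).1 + \sum_(q <- take x (gcomp D' j)) (delta D q).1,
   (a j).2 + \sum_(q <- take x (gcomp D' j)) (delta D q).2).
Proof.
by rewrite /label_at; congr (_ + _, _ + _); apply: eq_bigr => q _; rewrite delta_move_start.
Qed.

Lemma label_at_move_start_other a j x : j != i -> label_at D' a j x = label_at D a j x.
Proof. by move=> ji; rewrite label_at_move_startE gcomp_move_start_other. Qed.

Lemma label_at_move_start_size a :
  label_at D' a i (size (gcomp D i)) = label_at D a i (size (gcomp D i)).
Proof.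
have perm_i := perm_gcomp_move_start i.
rewrite label_at_move_startE /label_at !take_oversize ?(perm_size perm_i) //.
by rewrite !(perm_big _ perm_i).
Qed.

Lemma in_label_move_start_other a q :
  q \notin gcomp D i -> in_label D' a q = in_label D a q.
Proof.
move=> q_i; rewrite /in_label comp_of_move_start; case E: comp_of => [j|] //.
have ji : j != i by apply: contraNneq q_i => <-; apply: comp_of_mem.
by rewrite label_at_move_start_other // gcomp_move_start_other.
Qed.

Lemma out_label_move_start_other a q :
  q \notin gcomp D i -> out_label D' a q = out_label D a q.
Proof.
move=> q_i; rewrite /out_label comp_of_move_start; case E: comp_of => [j|] //.
have ji : j != i by apply: contraNneq q_i => <-; apply: comp_of_mem.
by rewrite label_at_move_start_other // gcomp_move_start_other.
Qed.

Variables (p : 'I_k * bool) (rest : seq ('I_k * bool)).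
Hypothesis gcomp_i : gcomp D i = p :: rest.

Lemma gcomp_move_start : gcomp D' i = rcons rest p.
Proof. by rewrite /= eqxx gcomp_i rot1_cons. Qed.

Lemma label_at_move_start a x : (x <= size rest)%N ->
  label_at D' a i x = ((label_at D a i x.+1).1 - (delta D p).1,
                       (label_at D a i x.+1).2 - (delta D p).2).
Proof.
move=> le_x_rest; rewrite label_at_move_startE gcomp_move_start -cats1 takel_cat //.
by rewrite /label_at gcomp_i /= !big_cons; congr pair; rewrite addrCA [RHS]addrC addKr.
Qed.

End MoveStart.

Section FirstPassage.
Variables (m k : nat) (D : vdiagram m k) (i : 'I_m).
Hypothesis wfD : wf_diagram D.
Variables (p : 'I_k * bool) (rest : seq ('I_k * bool)).
Hypothesis gcomp_i : gcomp D i = p :: rest.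
Local Notation D' := (move_start D i).

Lemma comp_of_first : comp_of D p = Some i.
Proof. by apply: comp_of_gcomp; rewrite ?gcomp_i ?mem_head. Qed.

Lemma index_move_start_first : index p (gcomp D' i) = size rest.
Proof.
have := gcomp_uniq wfD i; rewrite gcomp_i => /andP[p_rest _].
by rewrite (gcomp_move_start gcomp_i) -cats1 index_pivot.
Qed.

Lemma in_label_first a : in_label D a p = a i.
Proof. by rewrite /in_label comp_of_first gcomp_i /= eqxx label_at0. Qed.

Lemma out_label_first a :
  out_label D a p = ((a i).1 + (delta D p).1, (a i).2 + (delta D p).2).
Proof.
by rewrite /out_label comp_of_first /label_at gcomp_i /= eqxx take0 !big_seq1.
Qed.

Lemma in_label_move_start_first a : in_label D' a p =
  ((a i).1 - (delta D p).1, (a i).2 + comp_weight D i - (delta D p).2).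
Proof.
rewrite /in_label comp_of_move_start comp_of_first index_move_start_first.
rewrite (label_at_move_start gcomp_i) // -[(size rest).+1]/(size (p :: rest)) -gcomp_i.
by rewrite label_at_size // add0r.
Qed.

Lemma out_label_move_start_first a :
  out_label D' a p = ((a i).1, (a i).2 + comp_weight D i).
Proof.
rewrite /out_label comp_of_move_start comp_of_first index_move_start_first.
rewrite -[(size rest).+1]/(size (p :: rest)) -gcomp_i.
by rewrite label_at_move_start_size label_at_size // addr0.
Qed.

Lemma bl_abs_in_label_move_start_first a : bl_abs (in_label D' a p) =
  bl_abs (in_label D a p) + (comp_weight D i - bl_abs (delta D p)).
Proof.
rewrite in_label_move_start_first in_label_first /bl_abs /=; lia.
Qed.

Lemma bl_abs_out_label_move_start_first a : bl_abs (out_label D' a p) =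
  bl_abs (out_label D a p) + (comp_weight D i - bl_abs (delta D p)).
Proof.
rewrite out_label_move_start_first out_label_first /bl_abs /=; lia.
Qed.

End FirstPassage.

Theorem lemma1 (m k : nat) (D : vdiagram m k) (a : 'I_m -> bilabel) (i : 'I_m)
  (c : 'I_k) (b : bool) (rest : seq ('I_k * bool)) (n iot : int) :
  wf_diagram D ->
  gcomp D i = (c, b) :: rest ->
  ~~ self_crossing D c ->
  comp_weight D i = n ->
  index_change D (c, b) = iot ->
  crossing_weight (move_start D i) a c
    = crossing_weight D a c + (if b then n - iot else - (n - iot)) /\
  (forall j : nat, (0 < j <= size (gcomp D i))%N ->
     label_at (move_start D i) a i j.-1
       = ((label_at D a i j).1, (label_at D a i j).2 - iot)).
Proof.
move=> wfD gcomp_i external <- iotE.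
have delta_cb : delta D (c, b) = (0, iot) by rewrite /delta (negbTE external) iotE.
have other_strand : (c, ~~ b) \notin gcomp D i.
  by apply: contra external; apply: self_crossing_of_mem; rewrite gcomp_i mem_head.
split.
  apply: crossing_weight_shift => //.
  - by rewrite (bl_abs_in_label_move_start_first wfD gcomp_i) delta_cb /bl_abs add0r.
  - by rewrite (bl_abs_out_label_move_start_first wfD gcomp_i) delta_cb /bl_abs add0r.
  - exact: in_label_move_start_other.
  - exact: out_label_move_start_other.
move=> [|j] //; rewrite gcomp_i /= => j_rest.
by rewrite (label_at_move_start gcomp_i) // delta_cb subr0.
Qed.
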